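(* For every integer $K\ge1$, $$s(5,K,3)=\begin{cases}\left\lceil\frac{K}{2}\right\rceil & \text{if } K\equiv 0 \text{ or } 9 \pmod{10},\\[2pt] \left\lceil\frac{K}{2}\right\rceil+1 & \text{otherwise.}\end{cases}$$
   Context: A placement delivery array $S$-PDA$(F,K,Z)$ is an $F\times K$ array $R=(r_{j,k})$, $1\le j\le F$, $1\le k\le K$, over a finite set $S$ such that: (1) each cell is either empty or contains an element of $S$; (2) each column contains exactly $Z$ empty cells; (3) each element of $S$ occurs at most once in each row and at most once in each column; (4) if two distinct nonempty cells satisfy $r_{j_1,k_1}=r_{j_2,k_2}=t\in S$, then the cells $r_{j_1,k_2}$ and $r_{j_2,k_1}$ are empty. For integers $F,K\ge1$, $0\le Z\le F$, define $s(F,K,Z)=\min\{|S| : \text{there exists an } S\text{-PDA}(F,K,Z)\}$. *)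

From mathcomp Require Import all_boot.
Unset Printing Implicit Defensive.

(* An S-PDA(F,K,Z) with symbol set S = 'I_n (any finite set of size n can be
   relabelled as 'I_n).  Cell (j,k) is [None] if empty, [Some t] if it holds t. *)
Definition is_PDA (F K Z n : nat) (R : 'I_F -> 'I_K -> option 'I_n) : Prop :=
  (forall k : 'I_K, #|[set j : 'I_F | R j k == None]| = Z) /\
  (forall (j : 'I_F) (k1 k2 : 'I_K) (t : 'I_n),
      R j k1 = Some t -> R j k2 = Some t -> k1 = k2) /\
  (forall (j1 j2 : 'I_F) (k : 'I_K) (t : 'I_n),
      R j1 k = Some t -> R j2 k = Some t -> j1 = j2) /\
  (forall (j1 j2 : 'I_F) (k1 k2 : 'I_K) (t : 'I_n),
      (j1, k1) <> (j2, k2) -> R j1 k1 = Some t -> R j2 k2 = Some t ->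
      R j1 k2 = None /\ R j2 k1 = None).

Definition PDA_exists (F K Z n : nat) : Prop :=
  exists R : 'I_F -> 'I_K -> option 'I_n, is_PDA F K Z n R.

Definition s_PDA_eq (F K Z m : nat) : Prop :=
  PDA_exists F K Z m /\ (forall n, n < m -> ~ PDA_exists F K Z n).

From mathcomp Require Import all_boot zify.

(* Upper bound: explicit arrays for K <= 10, and juxtaposing two arrays with
   disjoint symbol sets adds their columns and their symbols; the ten-column
   array uses only five symbols.
   Lower bound: every column has exactly two filled cells; call each the
   partner of the other.  Sending the rows that contain a symbol t to the rows
   of their partners lands, by condition (4), on rows without t; hence t fills
   at most four cells and 2K <= 4n.  If moreover 4n <= 2K + 2, all symbols but
   at most two are stars, filling four rows whose partners all lie in the
   fifth.  Weight each filled cell by w(row, partner row) for a table w with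
   w(a,b) + w(b,a) = 0 mod 5: the total vanishes mod 5 column by column.  For
   the weight tables below a star always weighs 1 mod 5, and a finite check of
   the few possible non-star remainders then gives 5 | n, i.e.
   K = 0 or 9 mod 10. *)

Set Implicit Arguments.
Unset Strict Implicit.

Section ArrayFromTable.
Variables (F K Z n : nat) (tb : seq (seq nat)).

Definition table_entry (j k : nat) : nat := nth 0 (nth [::] tb j) k.

Definition array_of_table (j : 'I_F) (k : 'I_K) : option 'I_n :=
  if table_entry j k is t.+1 then insub t else None.

Definition table_PDA : bool :=
  [&& all (fun k => count (fun j => table_entry j k == 0) (iota 0 F) == Z) (iota 0 K),
      all (fun j => all (fun k => table_entry j k <= n) (iota 0 K)) (iota 0 F),
      all (fun j => all (fun k1 => all (fun k2 =>
        (table_entry j k1 != 0) && (table_entry j k1 == table_entry j k2) ==> (k1 == k2))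
        (iota 0 K)) (iota 0 K)) (iota 0 F),
      all (fun j1 => all (fun j2 => all (fun k =>
        (table_entry j1 k != 0) && (table_entry j1 k == table_entry j2 k) ==> (j1 == j2))
        (iota 0 K)) (iota 0 F)) (iota 0 F) &
      all (fun j1 => all (fun j2 => all (fun k1 => all (fun k2 =>
        ((j1 != j2) || (k1 != k2)) && (table_entry j1 k1 != 0)
          && (table_entry j1 k1 == table_entry j2 k2) ==>
        (table_entry j1 k2 == 0) && (table_entry j2 k1 == 0))
        (iota 0 K)) (iota 0 K)) (iota 0 F)) (iota 0 F)].

Lemma all_iotaP (p : pred nat) m : all p (iota 0 m) -> forall i, i < m -> p i.
Proof. by move/allP=> Hp i Hi; apply: Hp; rewrite mem_iota. Qed.

Lemma card_ord_count m (p : pred nat) : #|[set j : 'I_m | p j]| = count p (iota 0 m).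
Proof.
rewrite cardsE cardE /enum_mem size_filter -val_enum_ord count_map enumT.
by apply: eq_count => x; rewrite !inE.
Qed.

Lemma table_PDA_is_PDA : table_PDA -> is_PDA F K Z n array_of_table.
Proof.
case/and5P=> Hcol Hle Hrow Hcolu Hcross.
have le_n (j : 'I_F) (k : 'I_K) : table_entry j k <= n.
  by have := all_iotaP (all_iotaP Hle (ltn_ord j)) (ltn_ord k).
have someE j k t : array_of_table j k = Some t <-> table_entry j k = t.+1.
  rewrite /array_of_table; case E: (table_entry j k) => [|c]; first by [].
  case: insubP => [u _ Eu | Hn]; last by have := le_n j k; rewrite E (negbTE Hn).
  split=> [[<-]|[Ec]]; first by rewrite Eu.
  by congr Some; apply: val_inj; rewrite /= Eu Ec.
have noneE j k : (array_of_table j k == None) = (table_entry j k == 0).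
  rewrite /array_of_table; case E: (table_entry j k) => [|c] //.
  by case: insubP => // Hn; have := le_n j k; rewrite E (negbTE Hn).
split; [|split; [|split]].
- move=> k; rewrite (eq_card (B := [set j : 'I_F | table_entry j k == 0])).
    rewrite (card_ord_count F (fun j => table_entry j k == 0)); apply/eqP.
    by have := all_iotaP Hcol (ltn_ord k).
  by move=> j; rewrite !inE noneE.
- move=> j k1 k2 t /someE E1 /someE E2; apply/val_inj/eqP.
  have := all_iotaP (all_iotaP (all_iotaP Hrow (ltn_ord j)) (ltn_ord k1)) (ltn_ord k2).
  by rewrite E1 E2 eqxx.
- move=> j1 j2 k t /someE E1 /someE E2; apply/val_inj/eqP.
  have := all_iotaP (all_iotaP (all_iotaP Hcolu (ltn_ord j1)) (ltn_ord j2)) (ltn_ord k).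
  by rewrite E1 E2 eqxx.
- move=> j1 j2 k1 k2 t Hne /someE E1 /someE E2.
  have := all_iotaP (all_iotaP (all_iotaP (all_iotaP Hcross (ltn_ord j1))
    (ltn_ord j2)) (ltn_ord k1)) (ltn_ord k2).
  have -> : (val j1 != val j2) || (val k1 != val k2).
    case: eqP => [/val_inj Ej|] //=; apply/negP => /eqP /val_inj Ek.
    by apply: Hne; rewrite Ej Ek.
  by rewrite E1 E2 eqxx /= => /andP [H1 H2]; rewrite -!noneE in H1 H2; split; apply/eqP.
Qed.

End ArrayFromTable.

Section SideBySide.
Variables (F Z K1 K2 n1 n2 : nat).
Variables (R1 : 'I_F -> 'I_K1 -> option 'I_n1) (R2 : 'I_F -> 'I_K2 -> option 'I_n2).

Definition array_hcat (j : 'I_F) (k : 'I_(K1 + K2)) : option 'I_(n1 + n2) :=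
  match split k with
  | inl a => omap (lshift n2) (R1 j a)
  | inr b => omap (@rshift n1 n2) (R2 j b)
  end.

Lemma omap_eq_Some (A B : Type) (f : A -> B) x y :
  omap f x = Some y -> exists2 x', x = Some x' & y = f x'.
Proof. by case: x => //= x' [<-]; exists x'. Qed.
Arguments omap_eq_Some {A B f x y}.

Lemma lshift_neq_rshift (t1 : 'I_n1) (t2 : 'I_n2) : lshift n2 t1 <> rshift n1 t2.
Proof. by move/(congr1 val) => /=; have := ltn_ord t1; lia. Qed.

Lemma array_hcat_PDA :
  is_PDA F K1 Z n1 R1 -> is_PDA F K2 Z n2 R2 -> is_PDA F (K1 + K2) Z (n1 + n2) array_hcat.
Proof.
move=> [A1 [B1 [C1 D1]]] [A2 [B2 [C2 D2]]]; rewrite /array_hcat.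
split; [|split; [|split]].
- move=> k; case: splitP => [a _ | b _].
  + by rewrite -(A1 a); apply: eq_card => j; rewrite !inE; case: (R1 j a).
  + by rewrite -(A2 b); apply: eq_card => j; rewrite !inE; case: (R2 j b).
- move=> j k1 k2 t; case: splitP => [a1 E1 | b1 E1]; case: splitP => [a2 E2 | b2 E2];
    move=> /= /omap_eq_Some [x1 H1 ->] /omap_eq_Some [x2 H2 Ex].
  + move/lshift_inj: Ex H2 => <- H2; apply: val_inj.
    by rewrite /= E1 E2 (B1 _ _ _ _ H1 H2).
  + by case: (lshift_neq_rshift Ex).
  + by case: (lshift_neq_rshift (esym Ex)).
  + move/rshift_inj: Ex H2 => <- H2; apply: val_inj.
    by rewrite /= E1 E2 (B2 _ _ _ _ H1 H2).
- move=> j1 j2 k t; case: splitP => [a _ | b _];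
    move=> /= /omap_eq_Some [x1 H1 ->] /omap_eq_Some [x2 H2 Ex].
  + by move/lshift_inj: Ex H2 => <-; exact: C1 H1.
  + by move/rshift_inj: Ex H2 => <-; exact: C2 H1.
- move=> j1 j2 k1 k2 t Hne; case: splitP => [a1 E1 | b1 E1]; case: splitP => [a2 E2 | b2 E2];
    move=> /= /omap_eq_Some [x1 H1 ->] /omap_eq_Some [x2 H2 Ex].
  + move/lshift_inj: Ex H2 => <- H2.
    have Hne' : (j1, a1) <> (j2, a2).
      by case=> Ej Ea; apply: Hne; congr pair => //; apply: val_inj; rewrite /= E1 E2 Ea.
    by have [-> ->] := D1 _ _ _ _ _ Hne' H1 H2.
  + by case: (lshift_neq_rshift Ex).
  + by case: (lshift_neq_rshift (esym Ex)).
  + move/rshift_inj: Ex H2 => <- H2.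
    have Hne' : (j1, b1) <> (j2, b2).
      by case=> Ej Eb; apply: Hne; congr pair => //; apply: val_inj; rewrite /= E1 E2 Eb.
    by have [-> ->] := D2 _ _ _ _ _ Hne' H1 H2.
Qed.

End SideBySide.

Lemma PDA_exists_hcat F Z K1 K2 n1 n2 :
  PDA_exists F K1 Z n1 -> PDA_exists F K2 Z n2 -> PDA_exists F (K1 + K2) Z (n1 + n2).
Proof. by move=> [R1 H1] [R2 H2]; exists (array_hcat R1 R2); exact: array_hcat_PDA. Qed.

Definition s_value (K : nat) : nat :=
  if (K %% 10 == 0) || (K %% 10 == 9) then (K.+1)./2 else (K.+1)./2 + 1.

Definition small_table (K : nat) : seq (seq nat) :=
  match K with
  | 1 => [:: [:: 1]; [:: 2]; [:: 0]; [:: 0]; [:: 0]]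
  | 2 => [:: [:: 1; 0]; [:: 2; 0]; [:: 0; 1]; [:: 0; 2]; [:: 0; 0]]
  | 3 => [:: [:: 1; 3; 0]; [:: 2; 0; 3]; [:: 0; 2; 1]; [:: 0; 0; 0]; [:: 0; 0; 0]]
  | 4 => [:: [:: 1; 3; 0; 0]; [:: 2; 0; 3; 0]; [:: 0; 2; 1; 0]; [:: 0; 0; 0; 1]; [:: 0; 0; 0; 2]]
  | 5 => [:: [:: 1; 3; 0; 0; 0]; [:: 2; 4; 0; 0; 0]; [:: 0; 0; 1; 3; 0]; [:: 0; 0; 2; 0; 3]; [:: 0; 0; 0; 2; 1]]
  | 6 => [:: [:: 1; 3; 4; 0; 0; 0]; [:: 2; 0; 0; 3; 4; 0]; [:: 0; 2; 0; 1; 0; 4]; [:: 0; 0; 2; 0; 1; 3]; [:: 0; 0; 0; 0; 0; 0]]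
  | 7 => [:: [:: 1; 3; 5; 0; 0; 0; 0]; [:: 2; 4; 0; 5; 0; 0; 0]; [:: 0; 0; 2; 1; 3; 4; 0]; [:: 0; 0; 0; 0; 5; 0; 1]; [:: 0; 0; 0; 0; 0; 5; 2]]
  | 8 => [:: [:: 1; 3; 5; 0; 0; 0; 0; 0]; [:: 2; 4; 0; 5; 0; 0; 0; 0]; [:: 0; 0; 2; 1; 3; 4; 0; 0]; [:: 0; 0; 0; 0; 5; 0; 1; 4]; [:: 0; 0; 0; 0; 0; 5; 2; 3]]
  | 9 => [:: [:: 1; 3; 4; 5; 0; 0; 0; 0; 0]; [:: 2; 0; 0; 0; 3; 4; 5; 0; 0]; [:: 0; 2; 0; 0; 1; 0; 0; 4; 5]; [:: 0; 0; 2; 0; 0; 1; 0; 3; 0]; [:: 0; 0; 0; 2; 0; 0; 1; 0; 3]]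
  | 10 => [:: [:: 1; 3; 4; 5; 0; 0; 0; 0; 0; 0]; [:: 2; 0; 0; 0; 3; 4; 5; 0; 0; 0]; [:: 0; 2; 0; 0; 1; 0; 0; 4; 5; 0]; [:: 0; 0; 2; 0; 0; 1; 0; 3; 0; 5]; [:: 0; 0; 0; 2; 0; 0; 1; 0; 3; 4]]
  | _ => [::]
  end.

Lemma small_table_PDA K : 0 < K <= 10 -> table_PDA 5 K 3 (s_value K) (small_table K).
Proof. by case: K => [|[|[|[|[|[|[|[|[|[|[|K]]]]]]]]]]] //; vm_compute. Qed.

Lemma PDA_exists_small K : 0 < K <= 10 -> PDA_exists 5 K 3 (s_value K).
Proof.
move=> HK; exists (array_of_table (s_value K) (small_table K)).
exact/table_PDA_is_PDA/small_table_PDA.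
Qed.

Lemma s_valueD10 K : s_value (K + 10) = s_value K + 5.
Proof. by rewrite /s_value modnDr -!divn2; case: ifP => _; lia. Qed.

Lemma PDA_exists_s_value K : 0 < K -> PDA_exists 5 K 3 (s_value K).
Proof.
move=> HK; have -> : K = (K.-1 %% 10).+1 + K.-1 %/ 10 * 10.
  by have := divn_eq K.-1 10; lia.
have Hsmall : 0 < (K.-1 %% 10).+1 <= 10 by rewrite ltn_pmod.
elim: (K.-1 %/ 10) => [|q IH]; first by rewrite addn0; exact: PDA_exists_small.
rewrite mulSn addnCA addnC s_valueD10 -[5]/(s_value 10).
exact: PDA_exists_hcat IH (PDA_exists_small _).
Qed.

Section TwoFilledCellsPerColumn.
Variables (F K Z n : nat) (R : 'I_F -> 'I_K -> option 'I_n).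

Definition partner (j : 'I_F) (k : 'I_K) : 'I_F :=
  odflt j [pick i | (i != j) && (R i k != None)].

Definition link (t : 'I_n) (j : 'I_F) : option 'I_F :=
  if [pick k | R j k == Some t] is Some k then Some (partner j k) else None.

Hypotheses (HR : is_PDA F K Z n R) (HZF : Z + 2 = F).

Lemma filled_cells k : exists a b, a != b /\ [set j | R j k != None] = [set a; b].
Proof.
have Ecompl : ~: [set j | R j k == None] = [set j | R j k != None].
  by apply/setP => j; rewrite !inE.
have := cardsC [set j | R j k == None]; rewrite HR.1 card_ord Ecompl => Hcard.
by apply/cards2P/eqP; lia.
Qed.

Lemma partner_eq a b k :
  a != b -> [set j | R j k != None] = [set a; b] -> partner a k = b.
Proof.
move=> Hab E; rewrite /partner; case: pickP => [i /andP [Hia Hi] | Hnone] /=.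
- have : i \in [set a; b] by rewrite -E inE.
  by rewrite !inE (negbTE Hia) => /eqP.
- have : b \in [set j | R j k != None] by rewrite E !inE eqxx orbT.
  by rewrite inE => Hb; have := Hnone b; rewrite Hb eq_sym Hab.
Qed.

Lemma column_partner_sum k : exists a b, a != b /\ forall G : 'I_F -> 'I_F -> nat,
  \sum_(j < F) (if R j k is Some _ then G j (partner j k) else 0) = G a b + G b a.
Proof.
have [a [b [Hab E]]] := filled_cells k; exists a, b; split => // G.
have E' : [set j | R j k != None] = [set b; a] by rewrite E setUC.
rewrite (bigID (fun j => R j k != None)) /= [X in _ + X]big1; last first.
  by move=> j /negbNE /eqP ->.
rewrite addn0 (eq_bigl (fun j => j \in [set a; b])); last by move=> j; rewrite -E inE.
rewrite (eq_bigr (fun j => G j (partner j k))); last first.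
  by move=> j; rewrite -E inE; case: (R j k).
have Hba : b != a by rewrite eq_sym.
by rewrite big_setU1 ?big_set1 ?inE // (partner_eq Hab E) (partner_eq Hba E').
Qed.

Lemma partner_spec j k :
  R j k != None -> partner j k != j /\ R (partner j k) k != None.
Proof.
move=> Hj; have [a [b [Hab E]]] := filled_cells k.
have E' : [set j | R j k != None] = [set b; a] by rewrite E setUC.
have : j \in [set a; b] by rewrite -E inE.
have Ha : a \in [set j | R j k != None] by rewrite E !inE eqxx.
have Hb : b \in [set j | R j k != None] by rewrite E !inE eqxx orbT.
rewrite !inE in Ha Hb.
rewrite !inE => /orP [/eqP-> | /eqP->].
- by rewrite (partner_eq Hab E) eq_sym Hab.
- by rewrite eq_sym in Hab; rewrite (partner_eq Hab E') eq_sym.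
Qed.

Lemma row_symbol_sum j (G : 'I_K -> nat) :
  \sum_(t < n) (if [pick k | R j k == Some t] is Some k then G k else 0) =
  \sum_(k < K) (if R j k is Some _ then G k else 0).
Proof.
symmetry; transitivity (\sum_(k < K) \sum_(t < n) (if R j k == Some t then G k else 0)).
  apply: eq_bigr => k _; case E: (R j k) => [t0|]; last by rewrite big1.
  rewrite (bigD1 t0) //= eqxx big1 ?addn0 // => t Ht.
  by case: eqP => // [[Et]]; rewrite Et eqxx in Ht.
rewrite exchange_big; apply: eq_bigr => t _.
case: pickP => [k0 /eqP Hk0 | Hnone]; last by apply: big1 => k _; rewrite Hnone.
rewrite (bigD1 k0) //= Hk0 eqxx big1 ?addn0 // => k Hk.
by case: eqP => // Hjk; rewrite (HR.2.1 _ _ _ _ Hjk Hk0) eqxx in Hk.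
Qed.

Lemma link_sum (G : 'I_F -> 'I_F -> nat) :
  \sum_(t < n) \sum_(j < F) (if link t j is Some x then G j x else 0) =
  \sum_(k < K) \sum_(j < F) (if R j k is Some _ then G j (partner j k) else 0).
Proof.
rewrite exchange_big [RHS]exchange_big; apply: eq_bigr => j _.
rewrite -(row_symbol_sum j (fun k => G j (partner j k))).
by apply: eq_bigr => t _; rewrite /link; case: pickP.
Qed.

Lemma link_size_sum :
  \sum_(t < n) \sum_(j < F) (if link t j is Some _ then 1 else 0) = 2 * K.
Proof.
rewrite (link_sum (fun _ _ => 1)) (eq_bigr (fun _ => 2)).
  by rewrite sum_nat_const card_ord mulnC.
by move=> k _; have [a [b [_ /(_ (fun _ _ => 1))]]] := column_partner_sum k.
Qed.

Lemma link_weight_dvd p (w : 'I_F -> 'I_F -> nat) :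
  (forall a b, a != b -> p %| w a b + w b a) ->
  p %| \sum_(t < n) \sum_(j < F) (if link t j is Some x then w j x else 0).
Proof.
move=> Hw; rewrite link_sum; apply: dvdn_sum => k _.
by have [a [b [Hab /(_ w) ->]]] := column_partner_sum k; exact: Hw.
Qed.

Lemma link_target_not_linked t j x : link t j = Some x -> x != j /\ link t x = None.
Proof.
rewrite /link; case: pickP => // k /eqP Hk [<-].
have [Hne Hfilled] : partner j k != j /\ R (partner j k) k != None.
  by apply: partner_spec; rewrite Hk.
split => //; case: pickP => // k' /eqP Hk'.
have Hjk : (j, k) <> (partner j k, k') by case=> Ej _; rewrite -Ej eqxx in Hne.
by have [_ Hnone] := HR.2.2.2 _ _ _ _ _ Hjk Hk Hk'; rewrite Hnone in Hfilled.
Qed.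

End TwoFilledCellsPerColumn.

(* The configuration of a symbol in a five-row array is the list of its
   [link]s, encoded over [option nat] so that the finite checks below compute. *)
Definition entries : seq (option nat) := None :: map Some (iota 0 5).

Fixpoint words (m : nat) : seq (seq (option nat)) :=
  if m is m'.+1 then [seq x :: l | x <- entries, l <- words m'] else [:: [::]].

Definition admissible (l : seq (option nat)) : bool :=
  (size l == 5) && all (fun i => if nth None l i is Some x then
     [&& x < 5, x != i & nth None l x == None] else true) (iota 0 5).

Definition cweight (w : nat -> nat -> nat) (l : seq (option nat)) : nat :=
  sumn [seq (if nth None l i is Some x then w i x else 0) | i <- iota 0 5].

Definition csize : seq (option nat) -> nat := cweight (fun _ _ => 1).

Definition star (l : seq (option nat)) : bool := csize l == 4.

Definition weight_tables : seq (seq (seq nat)) :=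
[:: [:: [:: 0; 4; 0; 0; 0]; [:: 1; 0; 3; 0; 0]; [:: 0; 2; 0; 2; 0]; [:: 0; 0; 3; 0; 1]; [:: 0; 0; 0; 4; 0]];
 [:: [:: 0; 0; 4; 0; 0]; [:: 0; 0; 4; 0; 0]; [:: 1; 1; 0; 2; 0]; [:: 0; 0; 3; 0; 1]; [:: 0; 0; 0; 4; 0]];
 [:: [:: 0; 0; 0; 4; 0]; [:: 0; 0; 3; 1; 0]; [:: 0; 2; 0; 2; 0]; [:: 1; 4; 3; 0; 1]; [:: 0; 0; 0; 4; 0]];
 [:: [:: 0; 0; 0; 0; 4]; [:: 0; 0; 3; 0; 1]; [:: 0; 2; 0; 2; 0]; [:: 0; 0; 3; 0; 1]; [:: 1; 4; 0; 4; 0]];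
 [:: [:: 0; 4; 1; 4; 0]; [:: 1; 0; 3; 0; 0]; [:: 4; 2; 0; 3; 0]; [:: 1; 0; 2; 0; 1]; [:: 0; 0; 0; 4; 0]];
 [:: [:: 0; 4; 1; 0; 4]; [:: 1; 0; 3; 0; 0]; [:: 4; 2; 0; 2; 1]; [:: 0; 0; 3; 0; 1]; [:: 1; 0; 4; 4; 0]];
 [:: [:: 0; 4; 0; 1; 4]; [:: 1; 0; 3; 0; 0]; [:: 0; 2; 0; 2; 0]; [:: 4; 0; 3; 0; 2]; [:: 1; 0; 0; 3; 0]];
 [:: [:: 0; 4; 0; 0; 0]; [:: 1; 0; 4; 4; 0]; [:: 0; 1; 0; 3; 0]; [:: 0; 1; 2; 0; 1]; [:: 0; 0; 0; 4; 0]];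
 [:: [:: 0; 4; 0; 0; 0]; [:: 1; 0; 4; 0; 4]; [:: 0; 1; 0; 2; 1]; [:: 0; 0; 3; 0; 1]; [:: 0; 1; 4; 4; 0]];
 [:: [:: 0; 4; 0; 0; 0]; [:: 1; 0; 3; 1; 4]; [:: 0; 2; 0; 2; 0]; [:: 0; 4; 3; 0; 2]; [:: 0; 1; 0; 3; 0]];
 [:: [:: 0; 4; 0; 0; 0]; [:: 1; 0; 3; 0; 0]; [:: 0; 2; 0; 3; 4]; [:: 0; 0; 2; 0; 2]; [:: 0; 0; 1; 3; 0]]].

Notation tweight tb := (cweight (table_entry tb)).

Lemma weight_tables_antisymmetric_mod5 : all (fun tb => all (fun a => all (fun b =>
  (a == b) || ((table_entry tb a b + table_entry tb b a) %% 5 == 0))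
  (iota 0 5)) (iota 0 5)) weight_tables.
Proof. by vm_compute. Qed.

Lemma weight_table_antisymmetric tb (a b : 'I_5) : tb \in weight_tables -> a != b ->
  5 %| table_entry tb a b + table_entry tb b a.
Proof.
move=> Htb Hab; have /allP /(_ tb Htb) /allP /(_ a) := weight_tables_antisymmetric_mod5.
rewrite mem_iota ltn_ord => /(_ isT) /allP /(_ b); rewrite mem_iota ltn_ord => /(_ isT).
by case/orP => [/eqP /val_inj Eab | //]; rewrite Eab eqxx in Hab.
Qed.

Lemma star_certificate : all (fun l => admissible l ==>
  (csize l <= 4) && (star l ==> all (fun tb => tweight tb l %% 5 == 1) weight_tables))
  (words 5).
Proof. by vm_compute. Qed.

Lemma size2_certificate : all (fun l => admissible l && (csize l == 2) ==>
  all (fun k => all (fun tb => (k + tweight tb l) %% 5 == 0) weight_tables ==>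
    ((k + 1) %% 5 == 0)) (iota 0 5)) (words 5).
Proof. by vm_compute. Qed.

Definition admissible_triples := [seq l <- words 5 | admissible l && (csize l == 3)].

Lemma size3_pair_certificate : all (fun l => all (fun l' => all (fun k =>
  all (fun tb => (k + tweight tb l + tweight tb l') %% 5 == 0) weight_tables ==>
    ((k + 2) %% 5 == 0)) (iota 0 5)) admissible_triples) admissible_triples.
Proof. by vm_compute. Qed.

Lemma mem_words m l : size l = m -> all (mem entries) l -> l \in words m.
Proof.
elim: m l => [|m IH] [|x l] // [Hs] /andP [Hx Hl].
by apply: (allpairs_f (fun a b => a :: b)) => //; apply: IH.
Qed.

Lemma admissible_words l : admissible l -> l \in words 5.
Proof.
case/andP => /eqP Hs Ha; apply: mem_words => //.
apply/allP => x /(nthP None) [i Hi <-].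
have /allP /(_ i) := Ha; rewrite mem_iota /= -Hs Hi => /(_ isT).
case: (nth None l i) => [y|] // /and3P [Hy _ _].
by rewrite in_cons (mem_map (@Some_inj _)) mem_iota add0n leq0n -Hs Hy orbT.
Qed.

Lemma csize_le4 l : admissible l -> csize l <= 4.
Proof.
move=> Hl; have /allP /(_ l (admissible_words Hl)) := star_certificate.
by rewrite Hl => /andP [].
Qed.

Lemma star_tweight l tb : admissible l -> star l -> tb \in weight_tables ->
  tweight tb l %% 5 = 1.
Proof.
move=> Hl Hstar Htb; have /allP /(_ l (admissible_words Hl)) := star_certificate.
by rewrite Hl Hstar => /andP [_ /allP /(_ tb Htb) /eqP].
Qed.

Lemma size2_residue l k : admissible l -> csize l = 2 ->
  (forall tb, tb \in weight_tables -> (k + tweight tb l) %% 5 = 0) -> (k + 1) %% 5 = 0.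
Proof.
move=> Hl H2 Hk; rewrite -modnDml; apply/eqP.
have /allP /(_ l (admissible_words Hl)) := size2_certificate.
rewrite Hl H2 eqxx andbT implyTb => /allP /(_ (k %% 5)); rewrite mem_iota ltn_pmod // => /(_ isT) /implyP; apply; apply/allP => tb Htb.
by rewrite modnDml; apply/eqP/Hk.
Qed.

Lemma size3_pair_residue l l' k : admissible l -> csize l = 3 -> admissible l' -> csize l' = 3 ->
  (forall tb, tb \in weight_tables -> (k + tweight tb l + tweight tb l') %% 5 = 0) ->
  (k + 2) %% 5 = 0.
Proof.
move=> Hl H3 Hl' H3' Hk; rewrite -modnDml; apply/eqP.
have Tl : l \in admissible_triples by rewrite mem_filter Hl H3 admissible_words.
have Tl' : l' \in admissible_triples by rewrite mem_filter Hl' H3' admissible_words.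
have /allP /(_ l Tl) /allP /(_ l' Tl') /allP /(_ (k %% 5)) := size3_pair_certificate.
rewrite mem_iota ltn_pmod // => /(_ isT) /implyP; apply; apply/allP => tb Htb.
by rewrite -addnA modnDml addnA; apply/eqP/Hk.
Qed.

Lemma sum_le_const (T : Type) (f : T -> nat) c r :
  all (fun x => f x <= c) r -> \sum_(x <- r) f x <= c * size r.
Proof. by elim: r => [|x r IH]; rewrite ?big_nil // big_cons /= => /andP [Hx /IH]; lia. Qed.

Lemma csize_stars s : \sum_(l <- s | star l) csize l = 4 * count star s.
Proof.
rewrite (eq_bigr (fun _ => 4)); last by move=> l /eqP.
by rewrite big_const_seq iter_addn_0 mulnC.
Qed.

Lemma tweight_stars s tb : all admissible s -> tb \in weight_tables ->
  \sum_(l <- s | star l) tweight tb l = count star s %[mod 5].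
Proof.
move=> Hadm Htb.
rewrite -modn_summ big_seq_cond (eq_bigr (fun _ => 1)) -?big_seq_cond ?sum1_count //.
by move=> l /andP [Hl Hstar]; exact: star_tweight (allP Hadm l Hl) Hstar Htb.
Qed.

Lemma five_dvd_nearly_star_family s :
  all admissible s ->
  (forall tb, tb \in weight_tables -> 5 %| \sum_(l <- s) tweight tb l) ->
  ~~ odd (\sum_(l <- s) csize l) ->
  4 * size s <= \sum_(l <- s) csize l + 2 -> 5 %| size s.
Proof.
move=> Hadm Hdvd Heven Hdef.
set rest := [seq l <- s | ~~ star l]; set m := count star s.
have Hsize : size s = m + size rest by rewrite size_filter count_predC.
have Hcsize : \sum_(l <- s) csize l = 4 * m + \sum_(l <- rest) csize l.
  by rewrite (bigID star) /= big_filter csize_stars.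
have Hweight tb : tb \in weight_tables -> (m + \sum_(l <- rest) tweight tb l) %% 5 = 0.
  move=> Htb; rewrite -modnDml -(tweight_stars Hadm Htb) modnDml /rest big_filter.
  by have := Hdvd tb Htb; rewrite (bigID star) /= => /eqP.
have Hrest : all (fun l => admissible l && (csize l <= 3)) rest.
  apply/allP => l; rewrite mem_filter => /andP [Hstar Hl]; have Hadl := allP Hadm l Hl.
  by rewrite Hadl /=; have := csize_le4 Hadl; move: Hstar; rewrite /star; lia.
have Hrest3 : \sum_(l <- rest) csize l <= 3 * size rest.
  by apply: sum_le_const; apply/allP => l /(allP Hrest) /andP [].
rewrite Hsize; rewrite Hsize Hcsize in Hdef; rewrite Hcsize in Heven; clear Hsize Hcsize.
move: rest Hrest Hrest3 Hweight Hdef Heven => [|l [|l' [|l'' rest]]] /=.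
- by move=> _ _ /(_ _ (mem_head _ _)); rewrite big_nil ?addn0 => /eqP.
- rewrite !big_cons !big_nil !addn0 => /andP [/andP [Hl Hl3] _] _ Hweight Hdef Heven.
  have Hl2 : csize l = 2.
    by move: Heven Hdef Hl3; rewrite oddD oddM /=; case: (csize l) => [|[|[|[|]]]] //; lia.
  apply/eqP/(size2_residue Hl Hl2) => tb Htb.
  by have := Hweight tb Htb; rewrite big_seq1.
- rewrite !big_cons !big_nil !addn0 => /and3P [/andP [Hl Hl3] /andP [Hl' Hl3'] _] _.
  move=> Hweight Hdef _; have [H3 H3'] : csize l = 3 /\ csize l' = 3 by lia.
  apply/eqP/(size3_pair_residue Hl H3 Hl' H3') => tb Htb.
  by have := Hweight tb Htb; rewrite !big_cons big_nil addn0 addnA.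
- by move=> _ Hle _ Hdef; rewrite !big_cons in Hle Hdef; lia.
Qed.

Section FiveRows.
Variables (K n : nat) (R : 'I_5 -> 'I_K -> option 'I_n).

Definition config (t : 'I_n) : seq (option nat) :=
  mkseq (fun i => omap val (link R t (inord i))) 5.

Lemma cweight_config (g : nat -> nat -> nat) t :
  cweight g (config t) = \sum_(j < 5) (if link R t j is Some x then g j x else 0).
Proof.
rewrite /cweight sumnE big_map -[iota 0 5]/(index_iota 0 5) big_mkord.
by apply: eq_bigr => j _; rewrite nth_mkseq // inord_val; case: (link R t j).
Qed.

Hypothesis HR : is_PDA 5 K 3 n R.

Lemma config_admissible t : admissible (config t).
Proof.
rewrite /admissible size_mkseq; apply/allP => i; rewrite mem_iota => /andP [_ Hi].
rewrite nth_mkseq //; case Elink: (link R t (inord i)) => [x|] //=.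
have [Hxi Hx] := link_target_not_linked HR erefl Elink.
rewrite ltn_ord nth_mkseq // inord_val Hx andbT /=.
by apply: contra Hxi => /eqP Exi; apply/eqP/val_inj; rewrite /= inordK.
Qed.

Lemma PDA5_lower_bound : 2 * K <= 4 * n /\ (4 * n <= 2 * K + 2 -> 5 %| n).
Proof.
set s := [seq config t | t <- enum 'I_n].
have Hadm : all admissible s by apply/allP => l /mapP [t _ ->]; exact: config_admissible.
have Hsize : size s = n by rewrite size_map size_enum_ord.
have Hcsize : \sum_(l <- s) csize l = 2 * K.
  rewrite big_map big_enum /= -(link_size_sum HR erefl).
  by apply: eq_bigr => t _; rewrite /csize cweight_config.
have Hdvd tb : tb \in weight_tables -> 5 %| \sum_(l <- s) tweight tb l.
  move=> Htb; rewrite big_map big_enum /=.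
  under eq_bigr do rewrite cweight_config.
  apply: (link_weight_dvd HR erefl (w := fun a b : 'I_5 => table_entry tb a b)).
  by move=> a b; exact: weight_table_antisymmetric.
have Hle4 : \sum_(l <- s) csize l <= 4 * size s.
  by apply: sum_le_const; apply/allP => l /(allP Hadm) /csize_le4.
rewrite -Hsize -Hcsize; split => // Hdef.
by apply: five_dvd_nearly_star_family => //; rewrite Hcsize oddM.
Qed.
End FiveRows.

Theorem mainTheorem15 (K : nat) (hK : 1 <= K) :
  s_PDA_eq 5 K 3
    (if (K %% 10 == 0) || (K %% 10 == 9) then (K.+1)./2 else (K.+1)./2 + 1).
Proof.
rewrite -/(s_value K); split; first exact: PDA_exists_s_value.
move=> n Hn [R /PDA5_lower_bound [Hcover Hfive]].
move: Hn; rewrite /s_value -divn2; case: ifP => Hmod Hn; first lia.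
have /dvdnP [q Eq] : 5 %| n by apply: Hfive; lia.
by move/norP: Hmod => [/eqP H0 /eqP H9]; subst n; lia.
Qed.
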